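(* Let $g,h$ be relatively prime divisors of $N$ and $\chi\in X_N$, $\psi=\theta\chi^{-1}$. Then the eigensymbol $\alpha^{g,h}_{\chi,\psi}$ is zero unless $f_\chi$ divides $N/g$ and $f_\psi$ divides $N/h$.
   Context: $p$ is an odd prime, $M$ a positive integer with $p\nmid M\varphi(M)$, $N=M$ or $Mp$, $N>1$, $\Delta=(\mathbb{Z}/N\mathbb{Z})^\times/\langle-1\rangle$. $H$ is a space of level $N$ modular symbols: a $\mathbb{Z}_p[\Delta]$-module spanned by symbols $[u:v]$ ($u,v\in\mathbb{Z}/N\mathbb{Z}$ generating the unit ideal) satisfying $[u:v]=[-u:-v]=-[-v:u]$, $[u:v]=[u:u+v]+[u+v:v]$, $\langle a\rangle[u:v]=[au:av]$. $\theta:\Delta\to\mathbb{C}_p^\times$ is a character, $\mathcal{O}=\mathbb{Z}_p[\mu_{\varphi(N)}]$, $X_N=\mathrm{Hom}((\mathbb{Z}/N\mathbb{Z})^\times,\mathcal{O}^\times)$, $e_\theta=\frac1{\varphi(N)}\sum_a\theta^{-1}(a)\langle a\rangle$, $H^\theta=e_\theta(H\otimes_{\mathbb{Z}_p}\mathcal{O})$. $\alpha^{g,h}_{\chi,\psi}=\frac{1}{\varphi(N)^2}\sum_{a,b\in(\mathbb{Z}/N\mathbb{Z})^\times}\chi^{-1}(a)\psi^{-1}(b)[ga:hb]$. $f_\chi$ denotes the conductor of $\chi$. *)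

From HB Require Import structures.
From mathcomp Require Import all_boot all_order all_algebra all_fingroup.
Set Implicit Arguments. Unset Strict Implicit. Unset Printing Implicit Defensive.
Import GRing.Theory.
Local Open Scope ring_scope.

(* u, v in Z/NZ generate the unit ideal: gcd(u, v, N) = 1 (on representatives). *)
Definition unimod (N : nat) (u v : 'Z_N) : bool :=
  gcdn (gcdn (val u) (val v)) N == 1%N.

Definition char_trivial_mod (N : nat) (O : nzRingType) (chi : {unit 'Z_N} -> O)
  (d : nat) : bool :=
  [forall a : {unit 'Z_N}, ((val (val a) %% d) == (1 %% d))%N ==> (chi a == chi 1%g)].

(* conductor f_chi: least positive divisor d of N such that chi factors through
   (Z/dZ)^x, i.e. is trivial on the units congruent to 1 mod d. *)
Definition conductor (N : nat) (O : nzRingType) (chi : {unit 'Z_N} -> O) : nat :=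
  \big[minn/N]_(d < N.+1 | (0 < (d : nat))%N && ((d : nat) %| N)%N
                          && char_trivial_mod chi d) (d : nat).

Definition is_character (N : nat) (O : unitRingType) (chi : {unit 'Z_N} -> O) : Prop :=
  (forall a, chi a \is a GRing.unit) /\
  (forall a b : {unit 'Z_N}, chi (a * b)%g = chi a * chi b).

Definition alpha (N : nat) (O : unitRingType) (V : lmodType O)
  (sym : 'Z_N -> 'Z_N -> V) (g h : nat) (chi psi : {unit 'Z_N} -> O) : V :=
  ((totient N)%:R ^+ 2)^-1 *:
    \sum_(a : {unit 'Z_N}) \sum_(b : {unit 'Z_N})
       (((chi a)^-1 * (psi b)^-1) *: sym (g%:R * val a) (h%:R * val b)).

From HB Require Import structures.
From mathcomp Require Import all_boot all_order all_algebra all_fingroup all_solvable.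
From mathcomp Require Import zify.
Import GRing.Theory.
Set Implicit Arguments. Unset Strict Implicit. Unset Printing Implicit Defensive.

(* If [c] is a unit congruent to 1 modulo [N/g], then [g * c = g] in [Z/NZ], so the
   substitution [a |-> c a] leaves the symbols [[g a : h b]] unchanged while it
   multiplies the eigensymbol by [chi c]; as the order [phi(N)] of the unit group is
   invertible in [O], this forces [chi c = 1] unless the eigensymbol vanishes.  Hence
   [chi] is trivial modulo [N/g], and the characters trivial modulo [d] are exactly
   those whose conductor divides [d], because being trivial modulo [d1] and modulo
   [d2] implies being trivial modulo [gcd(d1, d2)] (a Chinese-remainder argument
   for the units of [Z/NZ]).  The same reasoning applies to [psi] and [N/h]. *)

Local Open Scope ring_scope.

Lemma root_of_unity_fixed_eq0 (O : idomainType) (V : lmodType O) (z : O) (m : nat) (x : V) :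
  z ^+ m = 1 -> z != 1 -> (m%:R : O) \is a GRing.unit -> z *: x = x -> x = 0.
Proof.
move=> zm1 z_neq1 m_unit zx.
have sum_pow0 : \sum_(i < m) z ^+ i = 0.
  apply/eqP; have := subrX1 z m; rewrite zm1 subrr => /esym/eqP.
  by rewrite mulf_eq0 subr_eq0 (negbTE z_neq1).
have zXx k : z ^+ k *: x = x.
  by elim: k => [|k IH]; rewrite ?scale1r // exprSr -scalerA zx.
have mx0 : (m%:R : O) *: x = 0.
  have -> : (m%:R : O) *: x = \sum_(i < m) x by rewrite sumr_const card_ord scaler_nat.
  rewrite (eq_bigr (fun i : 'I_m => z ^+ i *: x)) => [|i _]; last by rewrite zXx.
  by rewrite -scaler_suml sum_pow0 scale0r.
by rewrite -[x]scale1r -(mulVr m_unit) -scalerA mx0 scaler0.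
Qed.

(* Reindexing by [a |-> c * a] shows that the sum is fixed by [(chi c)^-1]. *)
Lemma char_twisted_sum_eq0 (O : idomainType) (V : lmodType O) (gT : finGroupType)
    (chi : gT -> O) (F : gT -> V) (c : gT) :
  (forall a, chi a \is a GRing.unit) ->
  (forall a b, chi (a * b)%g = chi a * chi b) ->
  (#|gT|%:R : O) \is a GRing.unit -> chi c != chi 1%g ->
  (forall a, F (c * a)%g = F a) ->
  \sum_a (chi a)^-1 *: F a = 0.
Proof.
move=> chi_unit chiM card_unit chi_c Fc.
have chi1 : chi 1%g = 1 by apply: (mulrI (chi_unit 1%g)); rewrite mulr1 -chiM mulg1.
have chiX k : chi (c ^+ k)%g = chi c ^+ k.
  by elim: k => [|k IH]; rewrite ?expg0 ?expr0 // expgS exprS chiM IH.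
apply: (@root_of_unity_fixed_eq0 _ _ (chi c)^-1 #|gT|) => //.
- by rewrite exprVn -chiX -cardsT expg_cardG ?in_setT // chi1 invr1.
- apply: contra chi_c => /eqP chiV1.
  by rewrite chi1 -[chi c]invrK chiV1 invr1.
- rewrite [RHS](reindex_inj (mulgI c)) scaler_sumr /=.
  apply: eq_bigr => a _; rewrite Fc scalerA chiM invrM ?chi_unit //.
  by rewrite mulrC.
Qed.

Lemma is_character_mulV (N : nat) (O : comUnitRingType) (theta chi psi : {unit 'Z_N} -> O) :
  is_character theta -> is_character chi -> (forall a, psi a = theta a * (chi a)^-1) ->
  is_character psi.
Proof.
move=> [theta_unit thetaM] [chi_unit chiM] psiE; split=> [a | a b].
  by rewrite psiE unitrM theta_unit unitrV chi_unit.
by rewrite !psiE thetaM chiM invrM ?chi_unit // [(chi b)^-1 * _]mulrC mulrACA.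
Qed.

Section Alpha.

Variables (N : nat) (O : comUnitRingType) (V : lmodType O).
Variables (sym : 'Z_N -> 'Z_N -> V) (g h : nat) (chi psi : {unit 'Z_N} -> O).

Lemma alphaE : alpha sym g h chi psi = ((totient N)%:R ^+ 2)^-1 *:
  \sum_a (chi a)^-1 *: \sum_b (psi b)^-1 *: sym (g%:R * val a) (h%:R * val b).
Proof.
congr (_ *: _); apply: eq_bigr => a _.
by rewrite scaler_sumr; apply: eq_bigr => b _; rewrite scalerA.
Qed.

Lemma alphaE_swap : alpha sym g h chi psi = ((totient N)%:R ^+ 2)^-1 *:
  \sum_b (psi b)^-1 *: \sum_a (chi a)^-1 *: sym (g%:R * val a) (h%:R * val b).
Proof.
rewrite /alpha exchange_big; congr (_ *: _); apply: eq_bigr => b _.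
by rewrite scaler_sumr; apply: eq_bigr => a _; rewrite scalerA mulrC.
Qed.

End Alpha.

Local Open Scope nat_scope.

Lemma coprime_totient_level (N p M : nat) :
  prime p -> ~~ (p %| M * totient M) -> N = M \/ N = M * p ->
  coprime (totient N) p.
Proof.
move=> p_prime p_ndvd NE; rewrite coprime_sym.
have p_ndvd_M : ~~ (p %| M) by apply: contra p_ndvd; apply: dvdn_mulr.
have p_ndvd_phiM : ~~ (p %| totient M) by apply: contra p_ndvd; apply: dvdn_mull.
case: NE => ->; first by rewrite prime_coprime.
have cMp : coprime M p by rewrite coprime_sym prime_coprime.
rewrite totient_coprime // (totient_prime p_prime) coprimeMr !prime_coprime // p_ndvd_phiM /=.
have p_gt1 := prime_gt1 p_prime.
by apply/negP => /dvdn_leq; lia.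
Qed.

(* With [k] the product of the primes of [N] not dividing [x], every prime of [N]
   divides exactly one of [x] and [L * k]. *)
Lemma exists_coprime_lift (N L x : nat) : 0 < N -> coprime x L ->
  exists y, y = x %[mod L] /\ coprime y N.
Proof.
move=> N_gt0 cxL.
pose k := \prod_(q <- primes N | ~~ (q %| x)) q.
exists (x + L * k); split; first by rewrite addnC mulnC modnMDl.
apply/negPn/negP => ncop.
have G_gt1 : 1 < gcdn (x + L * k) N by rewrite ltn_neqAle eq_sym ncop gcdn_gt0 N_gt0 orbT.
have q_prime := pdiv_prime G_gt1.
set q := pdiv _ in q_prime.
have qG : q %| gcdn (x + L * k) N by apply: pdiv_dvd.
have qy : q %| x + L * k by apply: dvdn_trans qG (dvdn_gcdl _ _).
have qN : q %| N by apply: dvdn_trans qG (dvdn_gcdr _ _).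
have [qx | qnx] := boolP (q %| x).
- move: qy; rewrite dvdn_addr // Euclid_dvdM // => /orP [qL | qk].
  + have : q %| gcdn x L by rewrite dvdn_gcd qx qL.
    by rewrite (eqP cxL) dvdn1 => /eqP q1; rewrite q1 in q_prime.
  + move: qk; rewrite Euclid_dvd_prod // big_has_cond => /hasP [r].
    rewrite mem_primes => /and3P [r_prime _ _] /andP [/= rnx].
    by rewrite dvdn_prime2 // => /eqP qr; rewrite -qr qx in rnx.
- have qk : q %| k.
    rewrite Euclid_dvd_prod // big_has_cond; apply/hasP; exists q.
      by rewrite mem_primes q_prime N_gt0 qN.
    by rewrite /= qnx dvdnn.
  by move: qy; rewrite dvdn_addl ?(negbTE qnx) // dvdn_mull.
Qed.

Lemma chinese_gcd (d1 d2 x : nat) : 0 < d1 -> 0 < x -> x = 1 %[mod gcdn d1 d2] ->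
  exists y, y = 1 %[mod d1] /\ y = x %[mod d2].
Proof.
move=> d1_gt0 x_gt0 /eqP; rewrite eqn_mod_dvd // => /dvdnP [t xE].
have [j _ /dvdnP [m jE]] := Bezoutl d2 d1_gt0.
exists (x + t * (j * d2)); split; last by rewrite addnC mulnA modnMDl.
have -> : x + t * (j * d2) = t * m * d1 + 1 by nia.
by rewrite modnMDl.
Qed.

Section Level.

Variable n : nat.
Local Notation N := n.+2.

Lemma unit_Zp_coprime (a : {unit 'Z_N}) : coprime N (val a).
Proof. by move: (valP a); rewrite -[X in X \is a _]natr_Zp unitZpE. Qed.

Lemma unit_Zp_chinese_gcd (a : {unit 'Z_N}) (d1 d2 : nat) :
  d1 %| N -> d2 %| N -> val a = 1 %[mod gcdn d1 d2] ->
  exists b : {unit 'Z_N}, val b = 1 %[mod d1] /\ val b = val a %[mod d2].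
Proof.
move=> d1N d2N a1.
have a_coprime := unit_Zp_coprime a.
have a_gt0 : 0 < val a by case: posnP a_coprime => // ->; rewrite /coprime gcdn0.
have [x [x1 xa]] := chinese_gcd (dvdn_gt0 (ltn0Sn _) d1N) a_gt0 a1.
have x_coprime : coprime x (d1 * d2).
  rewrite coprimeMr /coprime -gcdn_modl x1 gcdn_modl gcd1n /= -gcdn_modl xa gcdn_modl.
  by apply: coprime_dvdr d2N _; rewrite coprime_sym.
have [y [yx y_coprime]] := exists_coprime_lift (ltn0Sn n.+1) x_coprime.
have y_unit : ((y%:R)%R : 'Z_N) \is a GRing.unit by rewrite unitZpE // coprime_sym.
have yE d : d %| N -> d %| d1 * d2 -> val (FinRing.Unit y_unit) = x %[mod d].
  move=> dN dd; rewrite /= Zp_nat /= modn_dvdm //.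
  by rewrite -(modn_dvdm y dd) yx modn_dvdm.
exists (FinRing.Unit y_unit); split.
- by rewrite yE ?dvdn_mulr.
- by rewrite yE ?dvdn_mull.
Qed.

Section Character.

Variables (O : nzRingType) (chi : {unit 'Z_N} -> O).
Hypothesis chiM : forall a b, chi (a * b)%g = (chi a * chi b)%R.

Lemma char_trivial_mod_gcd (d1 d2 : nat) : d1 %| N -> d2 %| N ->
  char_trivial_mod chi d1 -> char_trivial_mod chi d2 ->
  char_trivial_mod chi (gcdn d1 d2).
Proof.
move=> d1N d2N /forallP chi_d1 /forallP chi_d2.
apply/forallP => a; apply/implyP => /eqP a1.
have [b [b1 ba]] := unit_Zp_chinese_gcd d1N d2N a1.
have b'a1 : val (b^-1 * a)%g = 1 %[mod d2].
  rewrite FinRing.val_unitM /= modn_dvdm // -modnMmr -ba modnMmr -(modn_dvdm _ d2N).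
  by rewrite -[_ %% N]/(val (val (b^-1 * b)%g)) mulVg.
have /eqP chi_b : chi b == chi 1%g by apply: (implyP (chi_d1 b)); apply/eqP.
have /eqP chi_b'a : chi (b^-1 * a)%g == chi 1%g.
  by apply: (implyP (chi_d2 _)); apply/eqP.
have -> : a = (b * (b^-1 * a))%g by rewrite mulKVg.
by rewrite chiM chi_b chi_b'a -chiM mulg1.
Qed.

Lemma char_trivial_mod_level : char_trivial_mod chi N.
Proof.
apply/forallP => a; apply/implyP; rewrite !modn_small ?ltn_ord // => /eqP a1.
by apply/eqP; congr chi; apply/val_inj/val_inj.
Qed.

Lemma conductor_spec :
  [&& 0 < conductor chi, conductor chi %| N & char_trivial_mod chi (conductor chi)].
Proof.
apply: (big_ind (fun d => [&& 0 < d, d %| N & char_trivial_mod chi d])).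
- by rewrite dvdnn char_trivial_mod_level.
- by move=> d1 d2 ? ?; rewrite /minn; case: ifP.
- by move=> d /andP [/andP [-> ->] ->].
Qed.

Lemma conductor_le (d : nat) : 0 < d -> d %| N -> char_trivial_mod chi d ->
  conductor chi <= d.
Proof.
move=> d_gt0 dN chi_d; have d_lt : d < N.+1 by rewrite ltnS dvdn_leq.
have P_d : (0 < Ordinal d_lt) && (Ordinal d_lt %| N) && char_trivial_mod chi (Ordinal d_lt).
  by rewrite /= d_gt0 dN.
exact: (Order.TotalTheory.bigmin_le_cond N (fun i : 'I_N.+1 => i : nat) P_d).
Qed.

Lemma conductor_dvd (d : nat) : 0 < d -> d %| N -> char_trivial_mod chi d ->
  conductor chi %| d.
Proof.
move=> d_gt0 dN chi_d; have /and3P [f_gt0 fN chi_f] := conductor_spec.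
have e_gt0 : 0 < gcdn (conductor chi) d by rewrite gcdn_gt0 f_gt0.
have f_le_e : conductor chi <= gcdn (conductor chi) d.
  by rewrite conductor_le ?char_trivial_mod_gcd // (dvdn_trans (dvdn_gcdl _ _)).
suff -> : conductor chi = gcdn (conductor chi) d by apply: dvdn_gcdr.
by apply/eqP; rewrite eqn_leq f_le_e dvdn_leq ?dvdn_gcdl.
Qed.

End Character.

Lemma natr_mulZp_cong1 (g : nat) (c : 'Z_N) : g %| N -> c = 1 %[mod N %/ g] ->
  (g%:R * c = g%:R :> 'Z_N)%R.
Proof.
move=> gN c1; apply: val_inj; rewrite /= Zp_nat /= modnMml.
have gmodE m : (g * m) %% N = g * (m %% (N %/ g)).
  by rewrite muln_modr [g * (N %/ g)]mulnC divnK.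
by rewrite gmodE c1 -gmodE muln1.
Qed.

Lemma conductor_dvd_of_twisted_sum (O : idomainType) (V : lmodType O)
    (chi : {unit 'Z_N} -> O) (F : 'Z_N -> V) (g : nat) :
  is_character chi -> ((totient N)%:R : O)%R \is a GRing.unit -> g %| N ->
  (\sum_a (chi a)^-1 *: F (g%:R * val a) != 0)%R -> conductor chi %| N %/ g.
Proof.
case=> chi_unit chiM phi_unit gN sum_neq0.
have Ng_dvd : N %/ g %| N by apply/dvdnP; exists g; rewrite mulnC divnK.
have g_gt0 := dvdn_gt0 (ltn0Sn _) gN.
have Ng_gt0 : 0 < N %/ g by rewrite divn_gt0 // dvdn_leq.
apply: (conductor_dvd chiM Ng_gt0 Ng_dvd).
apply/forallP => c; apply/implyP => /eqP c1; apply: contraNT sum_neq0 => chi_c.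
apply/eqP; apply: (char_twisted_sum_eq0 chi_unit chiM _ chi_c) => [|a].
  by have := card_units_Zp (ltn0Sn n.+1); rewrite /units_Zp cardsT => ->.
by rewrite FinRing.val_unitM mulrA natr_mulZp_cong1.
Qed.

Lemma conductor_dvd_of_alpha (O : idomainType) (V : lmodType O)
    (sym : 'Z_N -> 'Z_N -> V) (g h : nat) (chi psi : {unit 'Z_N} -> O) :
  is_character chi -> is_character psi -> ((totient N)%:R : O)%R \is a GRing.unit ->
  g %| N -> h %| N -> (alpha sym g h chi psi != 0)%R ->
  (conductor chi %| N %/ g) && (conductor psi %| N %/ h).
Proof.
move=> chi_char psi_char phi_unit gN hN alpha_neq0; apply/andP; split.
- apply: (conductor_dvd_of_twisted_sum
    (F := fun u => (\sum_b (psi b)^-1 *: sym u (h%:R * val b))%R) chi_char phi_unit gN).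
  by apply: contraNneq alpha_neq0 => sum0; rewrite alphaE sum0 scaler0.
- apply: (conductor_dvd_of_twisted_sum
    (F := fun v => (\sum_a (chi a)^-1 *: sym (g%:R * val a) v)%R) psi_char phi_unit hN).
  by apply: contraNneq alpha_neq0 => sum0; rewrite alphaE_swap sum0 scaler0.
Qed.

End Level.

Local Open Scope ring_scope.

Theorem lemma2p9
  (* p odd prime, M >= 1 with p not dividing M phi(M), N = M or Mp, N > 1 *)
  (N p M : nat)
  (Hp : prime p) (Hpodd : odd p) (HM : (0 < M)%N)
  (HpM : ~~ (p %| M * totient M)%N)
  (HN : N = M \/ N = (M * p)%N) (HN1 : (1 < N)%N)
  (* coefficient ring O = Z_p[mu_phi(N)] (abstracted: a domain in which
     integers prime to p are units and containing mu_phi(N)) *)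
  (O : idomainType)
  (HOp : forall n : nat, coprime n p -> (n%:R : O) \is a GRing.unit)
  (HOmu : exists z : O, (totient N).-primitive_root z)
  (* V = H (x)_{Z_p} O: the modular symbols [u:v] with their relations *)
  (V : lmodType O) (sym : 'Z_N -> 'Z_N -> V)
  (act : {unit 'Z_N} -> {linear V -> V})
  (Hspan : forall x : V, exists c : {ffun 'Z_N * 'Z_N -> O},
      x = \sum_(uv : 'Z_N * 'Z_N | unimod uv.1 uv.2) c uv *: sym uv.1 uv.2)
  (Hneg : forall u v : 'Z_N, unimod u v -> sym u v = sym (- u) (- v))
  (Hrot : forall u v : 'Z_N, unimod u v -> sym u v = - sym (- v) u)
  (Hman : forall u v : 'Z_N, unimod u v ->
      sym u v = sym u (u + v) + sym (u + v) v)
  (Hact : forall (a : {unit 'Z_N}) (u v : 'Z_N), unimod u v ->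
      act a (sym u v) = sym (val a * u) (val a * v))
  (Hact1 : forall x, act 1%g x = x)
  (HactM : forall (a b : {unit 'Z_N}) x, act (a * b)%g x = act a (act b x))
  (* theta : Delta -> C_p^x, a character of (Z/NZ)^x trivial on -1 *)
  (theta : {unit 'Z_N} -> O) (Htheta : is_character theta)
  (Htheta1 : forall a : {unit 'Z_N}, val a = -1 -> theta a = 1)
  (* g, h relatively prime divisors of N *)
  (g h : nat) (Hg : (g %| N)%N) (Hh : (h %| N)%N) (Hgh : coprime g h)
  (* chi in X_N, psi = theta chi^{-1} *)
  (chi : {unit 'Z_N} -> O) (Hchi : is_character chi)
  (psi : {unit 'Z_N} -> O) (Hpsi : forall a, psi a = theta a * (chi a)^-1) :
  alpha sym g h chi psi != 0 ->
  (conductor chi %| N %/ g)%N && (conductor psi %| N %/ h)%N.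
Proof.
have phi_unit : ((totient N)%:R : O) \is a GRing.unit.
  exact/HOp/(coprime_totient_level Hp HpM HN).
have psi_char := is_character_mulV Htheta Hchi Hpsi.
destruct N as [|[|n]]; [by [] | by [] |].
exact: conductor_dvd_of_alpha.
Qed.
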